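(* Let $G$ be a connected metrizable compact Hausdorff topological group acting on itself by left translation. Then $\mathbf{TC}_G(G)=\mathrm{cat}(G)$.
   Context: $\mathrm{cat}(X)$ denotes the (un-normalized) Lusternik–Schnirelmann category: the least $k$ such that $X$ is covered by $k$ open sets each of whose inclusions into $X$ is null-homotopic. Two $G$-maps are $G$-homotopic if there is a $G$-equivariant homotopy between them ($G$ acting trivially on $I=[0,1]$). For a $G$-map $p\colon E\to B$, $\mathrm{secat}_G(p)$ is the least $k$ such that $B$ is covered by $k$ $G$-invariant open sets $U_i$, each admitting a $G$-map $s\colon U_i\to E$ with $ps$ $G$-homotopic to the inclusion $U_i\hookrightarrow B$ ($\infty$ if none). For a $G$-space $X$, $\mathbf{TC}_G(X)=\mathrm{secat}_G(\pi)$ where $\pi\colon X^I\to X\times X$, $\pi(\gamma)=(\gamma(0),\gamma(1))$, $X^I$ has the compact-open topology and action $(g\gamma)(t)=g\gamma(t)$, and $X\times X$ has the diagonal action. *)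

From HB Require Import structures.
From mathcomp Require Import all_boot all_order all_algebra.
From mathcomp Require Import all_classical all_reals topology.
Set Implicit Arguments. Unset Strict Implicit. Unset Printing Implicit Defensive.
Import Order.TTheory GRing.Theory Num.Theory numFieldTopology.Exports.
Local Open Scope classical_set_scope.
Local Open Scope ring_scope.

Definition Iset (R : realType) : set R := [set x : R | 0 <= x <= 1].
Arguments Iset R : clear implicits.
Notation unitI R := (set_type (Iset R)).

Lemma zero_in_Iset (R : realType) : (0:R) \in Iset R.
Proof. by rewrite inE /Iset /= lexx ler01. Qed.
Lemma one_in_Iset (R : realType) : (1:R) \in Iset R.
Proof. by rewrite inE /Iset /= lexx ler01. Qed.
Definition I0 (R : realType) : unitI R := exist _ 0 (zero_in_Iset R).
Definition I1 (R : realType) : unitI R := exist _ 1 (one_in_Iset R).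

(* Least k satisfying P, or None (= infinity) if there is none. *)
Definition nat_inf (P : nat -> Prop) : option nat :=
  match pselect (exists n, P n) with
  | left h => Some (ex_minn (let: ex_intro n Pn := h in
                             ex_intro (fun n => `[< P n >]) n (asboolT Pn)))
  | right _ => None
  end.

Record topGroup (G : topologicalType) := TopGroup {
  gmul : G -> G -> G;
  ginv : G -> G;
  gone : G;
  gmulA : forall x y z, gmul x (gmul y z) = gmul (gmul x y) z;
  gmul1 : forall x, gmul gone x = x;
  gmulV : forall x, gmul (ginv x) x = gone;
  gmul_cont : continuous (fun p : G * G => gmul p.1 p.2);
  ginv_cont : continuous ginv
}.

Definition metrizable (R : realType) (X : topologicalType) : Prop :=
  exists d : X -> X -> R,
    [/\ forall x y, 0 <= d x y,
        forall x y, d x y = 0 <-> x = y,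
        forall x y, d x y = d y x,
        forall x y z, d x z <= d x y + d y z &
        forall (x : X) (A : set X),
          nbhs x A <-> exists2 e : R, 0 < e & [set y | d x y < e] `<=` A].

(* Lusternik-Schnirelmann category (un-normalized). *)
Definition nullhomotopic_incl (R : realType) (X : topologicalType) (U : set X) : Prop :=
  exists (c : X) (H : X * unitI R -> X),
    [/\ {within [set q | U q.1], continuous H},
        forall x, U x -> H (x, I0 R) = x &
        forall x, U x -> H (x, I1 R) = c].

Definition cat_cover (R : realType) (X : topologicalType) (k : nat) : Prop :=
  exists U : 'I_k -> set X,
    (forall x, exists i, U i x) /\
    (forall i, open (U i) /\ nullhomotopic_incl R (U i)).

Definition LScat (R : realType) (X : topologicalType) : option nat :=
  nat_inf (cat_cover R X).

Definition secat_cover (R : realType) (G : Type) (E B : topologicalType)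
  (aE : G -> E -> E) (aB : G -> B -> B) (p : E -> B) (k : nat) : Prop :=
  exists U : 'I_k -> set B,
    (forall x, exists i, U i x) /\
    (forall i,
      [/\ open (U i),
          (forall g x, U i x -> U i (aB g x)) &
          exists s : B -> E,
            [/\ {within U i, continuous s},
                (forall g x, U i x -> s (aB g x) = aE g (s x)) &
                exists H : B * unitI R -> B,
                  [/\ {within [set q | U i q.1], continuous H},
                      (forall x, U i x -> H (x, I0 R) = p (s x)),
                      (forall x, U i x -> H (x, I1 R) = x) &
                      (forall g x t, U i x -> H (aB g x, t) = aB g (H (x, t)))]]]).

Definition secatG (R : realType) (G : Type) (E B : topologicalType)
  (aE : G -> E -> E) (aB : G -> B -> B) (p : E -> B) : option nat :=
  nat_inf (secat_cover R aE aB p).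

Definition pathspace (R : realType) (X : topologicalType) : set {compact-open, unitI R -> X} :=
  [set gam | continuous gam].
Arguments pathspace R X : clear implicits.
Notation pathT R X := (set_type (pathspace R X)).

Lemma act_path_cont (R : realType) (G : Type) (X : topologicalType)
  (a : G -> X -> X) (acont : forall g, continuous (a g)) (g : G) (gam : pathT R X) :
  (fun t => a g (val gam t)) \in pathspace R X.
Proof.
rewrite inE /pathspace /=; move=> t; apply: continuous_comp; last exact: acont.
by case: gam => f /=; rewrite inE => fc; exact: fc.
Qed.

Definition act_path (R : realType) (G : Type) (X : topologicalType)
  (a : G -> X -> X) (acont : forall g, continuous (a g)) (g : G)
  (gam : pathT R X) : pathT R X :=
  exist _ (fun t => a g (val gam t)) (act_path_cont acont g gam).

Definition path_ends (R : realType) (X : topologicalType) (gam : pathT R X) : X * X :=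
  (val gam (I0 R), val gam (I1 R)).

Definition TCG (R : realType) (G : Type) (X : topologicalType)
  (a : G -> X -> X) (acont : forall g, continuous (a g)) : option nat :=
  secatG R (act_path (R:=R) acont) (fun g (p : X * X) => (a g p.1, a g p.2))
    (@path_ends R X).

Lemma left_transl_cont (G : topologicalType) (T : topGroup G) (g : G) :
  continuous (gmul T g).
Proof.
move=> x; have := @gmul_cont G T (g, x).
have -> : gmul T g = (fun p : G * G => gmul T p.1 p.2) \o (fun y => (g, y)) by [].
move=> h; apply: continuous_comp => //.
by apply: (cvg_pair (cvg_cst g)); exact: cvg_id.
Qed.

Arguments LScat R X : clear implicits.
Arguments metrizable R X : clear implicits.
Arguments TCG R {G X a} acont.

From HB Require Import structures.
From mathcomp Require Import all_boot all_order all_algebra.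
From mathcomp Require Import all_classical all_reals topology normedtype.

(* Write x \ y := x^-1 y; it is invariant under the diagonal action and
   1 \ v = v.  If W is an invariant open set of G x G with a path-valued s and
   a homotopy H from (path ends) o s to the inclusion, then {v | (1, v) in W}
   contracts in G through
     (v, t) |-> (a_t \ b_t) (gam(t) \ gam(0)),
   where (a_t, b_t) = H((1, v), 1 - t) and gam = s(1, v): at t = 0 this is
   1 \ v = v, at t = 1 it is (gam(0) \ gam(1)) (gam(1) \ gam(0)) = 1.
   Conversely, a contraction H of an open U to 1 gives the invariant open set
   {(x, y) | x \ y in U}, with the constant path at x as equivariant section and
   the equivariant homotopy (x, y, t) |-> (x, x H(x \ y, 1 - t)).  Of the
   hypotheses on G only connectedness is needed: it makes G path connected,
   as each open set of a categorical cover lies in a single path component,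
   so every contraction can be moved to end at 1. *)

Set Implicit Arguments. Unset Strict Implicit. Unset Printing Implicit Defensive.
Import GRing.Theory Num.Theory numFieldTopology.Exports.
Local Open Scope classical_set_scope.
Local Open Scope ring_scope.

Lemma continuous_fst (A B : topologicalType) : continuous (@fst A B).
Proof. by move=> p; exact: cvg_fst. Qed.

Lemma continuous_snd (A B : topologicalType) : continuous (@snd A B).
Proof. by move=> p; exact: cvg_snd. Qed.

Lemma open_preimage_fst (A B : topologicalType) (U : set A) :
  open U -> open [set q : A * B | U q.1].
Proof. by move=> oU; apply: open_comp => // q _; exact: continuous_fst. Qed.

Lemma continuous_pair_at (Y A B : topologicalType) (f : Y -> A) (g : Y -> B) y :
  {for y, continuous f} -> {for y, continuous g} ->
  {for y, continuous (fun z => (f z, g z))}.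
Proof. by move=> cf cg; exact: cvg_pair. Qed.

Lemma continuous_within_open_at (A B : topologicalType) (U : set A) (f : A -> B) x :
  open U -> {within U, continuous f} -> U x -> {for x, continuous f}.
Proof. by move=> oU; rewrite continuous_open_subspace // => cf Ux; apply/cf/mem_set. Qed.

Section unit_interval.
Variable R : realType.

Lemma compact_unitI : compact [set: unitI R].
Proof.
have cI : compact (Iset R).
  have -> : Iset R = `[0, 1]%classic.
    by apply/seteqP; split => x; rewrite /Iset /= in_itv.
  exact: segment_compact.
have cval : {within Iset R, continuous (valL_ (I0 R) id)}.
  by apply/(@subspace_valL_continuousP' R (Iset R) (unitI R) (I0 R) id) => x; exact: cvg_id.
have := continuous_compact cval cI; congr compact; apply/seteqP; split => // x _.
exists (val x); first by case: x => x /= /set_mem.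
by have := congr1 (@^~ x) (@valLK _ _ (I0 R) (Iset R) id).
Qed.

Lemma locally_compact_unitI : locally_compact [set: unitI R].
Proof.
move=> x _; exists setT; first exact: filterT.
by split; [exact: compact_unitI | exact: closedT].
Qed.

Lemma revI_subproof (t : unitI R) : (1 - val t) \in Iset R.
Proof.
case: t => x /= /set_mem /andP [x0 x1]; apply/mem_set; rewrite /Iset /=.
by apply/andP; split; [rewrite subr_ge0 | rewrite lerBlDr lerDl].
Qed.

Definition revI (t : unitI R) : unitI R := exist _ (1 - val t) (revI_subproof t).

Lemma continuous_revI : continuous revI.
Proof.
apply: continuous_comp_initial => t.
have csub : {for set_val t, continuous (fun y : R => 1 - y)}.
  by apply: (@cvgB _ R^o); [exact: cvg_cst | exact: cvg_id].
exact: continuous_comp (@initial_continuous _ _ set_val t) csub.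
Qed.

Lemma revI0 : revI (I0 R) = I1 R.
Proof. by apply: val_inj; rewrite /= subr0. Qed.

Lemma revI1 : revI (I1 R) = I0 R.
Proof. by apply: val_inj; rewrite /= subrr. Qed.

End unit_interval.

Section path_space.
Import ArrowAsCompactOpen.
Variables (R : realType) (X : topologicalType).

(* Evaluation is continuous because I is locally compact and regular. *)
Lemma continuous_path_eval : continuous (fun p : pathT R X * unitI R => val p.1 p.2).
Proof.
have cval : continuous (fun p : pathT R X => (val p : unitI R -> X)).
  exact: initial_continuous.
have := @continuous_uncurry_regular (pathT R X) (unitI R) X
  (fun p : pathT R X => (val p : unitI R -> X)) (@locally_compact_unitI R)
  uniform_regular cval (fun p => set_valP p).
by have -> : uncurry (fun p : pathT R X => (val p : unitI R -> X)) =
  (fun p : pathT R X * unitI R => val p.1 p.2) by apply/funext => -[].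
Qed.

Lemma cst_path_subproof (x : X) : (fun _ : unitI R => x) \in pathspace R X.
Proof. by apply/mem_set => t; exact: cst_continuous. Qed.

Definition cst_path (x : X) : pathT R X := exist _ (fun=> x) (cst_path_subproof x).

Lemma continuous_cst_path : continuous cst_path.
Proof.
apply: continuous_comp_initial.
exact: (@continuous_curry_fun X (unitI R) X fst (@continuous_fst X (unitI R))).
Qed.

End path_space.

Section contractions.
Variables (R : realType) (X : topologicalType).

Definition contracting_homotopy (U : set X) (c : X) (H : X * unitI R -> X) : Prop :=
  [/\ {within [set q | U q.1], continuous H},
      forall x, U x -> H (x, I0 R) = x &
      forall x, U x -> H (x, I1 R) = c].

Definition joinable (a b : X) : Prop := exists rho : unitI R -> X,
  [/\ continuous rho, rho (I0 R) = a & rho (I1 R) = b].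

Lemma joinable_sym a b : joinable a b -> joinable b a.
Proof.
move=> [rho [crho rho0 rho1]]; exists (rho \o @revI R); split.
- by move=> t; apply: continuous_comp; [exact: continuous_revI | exact: crho].
- by rewrite /= revI0.
- by rewrite /= revI1.
Qed.

Lemma contracting_homotopy_joinable U c H : open U -> contracting_homotopy U c H ->
  forall x, U x -> joinable x c.
Proof.
move=> oU [cH H0 H1] x Ux; exists (fun t => H (x, t)); split; [|exact: H0|exact: H1].
move=> t; have cHx := continuous_within_open_at (open_preimage_fst oU) cH (Ux : U (x, t).1).
apply: (continuous_comp _ cHx).
exact: (@continuous_pair_at _ _ _ (fun=> x) id _ (cvg_cst x) cvg_id).
Qed.

End contractions.

Arguments contracting_homotopy R {X}.
Arguments joinable R {X}.

Section topological_group.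
Variables (G : topologicalType) (T : topGroup G).
Local Notation m := (gmul T).
Local Notation iv := (ginv T).
Local Notation e := (gone T).

Lemma gmulgV x : m x (iv x) = e.
Proof.
set y := iv x.
rewrite -[m x y](gmul1 T) -(gmulV T y) -gmulA (gmulA T y x y) /y (gmulV T x).
by rewrite gmul1 gmulV.
Qed.

Lemma gmulg1 x : m x e = x.
Proof. by rewrite -(gmulV T x) gmulA gmulgV gmul1. Qed.

Lemma gmulI a : injective (m a).
Proof. by move=> x y /(congr1 (m (iv a))); rewrite !gmulA gmulV !gmul1. Qed.

Definition gldiv (x y : G) : G := m (iv x) y.

Lemma gldivv x : gldiv x x = e.
Proof. exact: gmulV. Qed.

Lemma gldivK x y : m x (gldiv x y) = y.
Proof. by rewrite /gldiv gmulA gmulgV gmul1. Qed.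

Lemma gldiv1x y : gldiv e y = y.
Proof. by apply: (@gmulI e); rewrite gldivK gmul1. Qed.

Lemma gmul_ldiv x y z : m (gldiv x y) (gldiv y z) = gldiv x z.
Proof. by apply: (@gmulI x); rewrite gmulA !gldivK. Qed.

Lemma gldivM g x y : gldiv (m g x) (m g y) = gldiv x y.
Proof. by apply: (@gmulI (m g x)); rewrite gldivK -gmulA gldivK. Qed.

Lemma continuous_gmul_at (Y : topologicalType) (f g : Y -> G) y :
  {for y, continuous f} -> {for y, continuous g} ->
  {for y, continuous (fun z => m (f z) (g z))}.
Proof.
move=> cf cg.
apply: (@continuous_comp _ _ _ (fun z => (f z, g z)) (fun p => m p.1 p.2)).
  exact: cvg_pair.
exact: gmul_cont.
Qed.

Lemma continuous_gldiv_at (Y : topologicalType) (f g : Y -> G) y :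
  {for y, continuous f} -> {for y, continuous g} ->
  {for y, continuous (fun z => gldiv (f z) (g z))}.
Proof.
move=> cf cg; apply: continuous_gmul_at => //.
by apply: (@continuous_comp _ _ _ f iv) => //; exact: ginv_cont.
Qed.

Lemma continuous_gldiv : continuous (fun q : G * G => gldiv q.1 q.2).
Proof. by move=> q; apply: continuous_gldiv_at; [exact: continuous_fst | exact: continuous_snd]. Qed.

End topological_group.

Section path_connected.
Variables (R : realType) (G : topologicalType) (T : topGroup G).
Local Notation m := (gmul T).
Local Notation e := (gone T).

(* No concatenation of paths is needed: t |-> alpha(t) b^-1 beta(t) joins a to c. *)
Lemma joinable_trans (a b c : G) : joinable R a b -> joinable R b c -> joinable R a c.
Proof.
move=> [al [cal al0 al1]] [be [cbe be0 be1]].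
exists (fun t => m (al t) (gldiv T b (be t))); split.
- move=> t; apply: (@continuous_gmul_at _ T _ al (fun t => gldiv T b (be t))); first exact: cal.
  by apply: continuous_gldiv_at; [exact: cst_continuous | exact: cbe].
- by rewrite al0 be0 gldivv gmulg1.
- by rewrite al1 be1 gldivK.
Qed.

Lemma cat_cover_joinable1 k : connected [set: G] -> cat_cover R G k ->
  forall x, joinable R x e.
Proof.
move=> cG [U [cov hU]].
have same i y z : U i y -> U i z -> joinable R y z.
  move=> Uy Uz; have [oU [c [H cH]]] := hU i.
  apply: joinable_trans (contracting_homotopy_joinable oU cH Uy) _.
  exact/joinable_sym/(contracting_homotopy_joinable oU cH Uz).
pose P := [set x | joinable R x e].
have oP : open P.
  rewrite openE => x Px; have [i Ui] := cov x.
  apply: filterS (open_nbhs_nbhs (conj (hU i).1 Ui)) => y Uy.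
  exact: joinable_trans (same i y x Uy Ui) Px.
have oCP : open (~` P).
  rewrite openE => x nPx; have [i Ui] := cov x.
  apply: filterS (open_nbhs_nbhs (conj (hU i).1 Ui)) => y Uy Py.
  exact/nPx/(joinable_trans (same i x y Ui Uy) Py).
have PT : P = [set: G].
  apply: cG.
  - by exists e, (fun=> e); split => //; exact: cst_continuous.
  - by exists P => //; rewrite setTI.
  - by exists P; [rewrite -[P]setCK; exact: open_closedC | rewrite setTI].
by move=> x; have : P x by rewrite PT.
Qed.

Lemma contracting_homotopy_to1 (U : set G) : (forall x, joinable R x e) ->
  open U -> nullhomotopic_incl R U -> exists H, contracting_homotopy R U e H.
Proof.
move=> all1 oU [c [H [cH H0 H1]]].
have [rho [crho rho0 rho1]] := all1 c.
exists (fun p => m (H p) (gldiv T c (rho p.2))); split.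
- rewrite continuous_open_subspace; last exact: open_preimage_fst.
  move=> p /set_mem Up.
  apply: (@continuous_gmul_at _ T _ H (fun p => gldiv T c (rho p.2))).
    exact: continuous_within_open_at (open_preimage_fst oU) cH Up.
  apply: (@continuous_gldiv_at _ T _ (fun=> c) (fun p => rho p.2)).
    exact: cst_continuous.
  exact: continuous_comp (@continuous_snd G (unitI R) p) (crho p.2).
- by move=> x Ux; rewrite /= rho0 gldivv gmulg1 H0.
- by move=> x Ux; rewrite /= rho1 H1 // gldivK.
Qed.

End path_connected.

Section equivariant_motion_planning.
Variables (R : realType) (G : topologicalType) (T : topGroup G).
Local Notation m := (gmul T).
Local Notation e := (gone T).
Local Notation act_diag := (fun g (q : G * G) => (m g q.1, m g q.2)).
Local Notation act_paths := (act_path (R:=R) (@left_transl_cont G T)).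

Definition tc_domain (W : set (G * G)) : Prop :=
  [/\ open W,
      (forall g q, W q -> W (act_diag g q)) &
      exists s : G * G -> pathT R G,
        [/\ {within W, continuous s},
            (forall g q, W q -> s (act_diag g q) = act_paths g (s q)) &
            exists H : (G * G) * unitI R -> G * G,
              [/\ {within [set p | W p.1], continuous H},
                  (forall q, W q -> H (q, I0 R) = path_ends (s q)),
                  (forall q, W q -> H (q, I1 R) = q) &
                  (forall g q t, W q -> H (act_diag g q, t) = act_diag g (H (q, t)))]]].

Lemma tc_domain_fibre (W : set (G * G)) :
  tc_domain W -> open [set v | W (e, v)] /\ nullhomotopic_incl R [set v | W (e, v)].
Proof.
move=> [oW _ [s [cs _ [H [cH H0 H1 _]]]]].
have ce : continuous (fun v : G => (e, v)).
  by move=> v; exact: (@continuous_pair_at _ _ _ (fun=> e) id _ (cvg_cst e) cvg_id).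
have oV : open [set v | W (e, v)] by apply: open_comp => // v _; exact: ce.
split => //.
pose hk (p : G * unitI R) := H ((e, p.1), revI p.2).
pose gam (p : G * unitI R) := val (s (e, p.1)).
exists e, (fun p => m (gldiv T (hk p).1 (hk p).2) (gldiv T (gam p p.2) (gam p (I0 R)))).
split.
- rewrite continuous_open_subspace; last exact: open_preimage_fst.
  move=> p /set_mem Vp.
  have chk : {for p, continuous hk}.
    apply: (@continuous_comp _ _ _ (fun p : G * unitI R => ((e, p.1), revI p.2)) H).
      apply: (@continuous_pair_at _ _ _ (fun p : G * unitI R => (e, p.1))
        (fun p : G * unitI R => revI p.2)).
        exact: continuous_comp (@continuous_fst G (unitI R) p) (ce p.1).
      exact: continuous_comp (@continuous_snd G (unitI R) p) (@continuous_revI R p.2).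
    by apply: continuous_within_open_at (open_preimage_fst oW) cH _.
  have cgam (f : G * unitI R -> unitI R) : {for p, continuous f} ->
      {for p, continuous (fun p => gam p (f p))}.
    move=> cf; apply: (@continuous_comp _ _ _ (fun p => (s (e, p.1), f p))
      (fun q : pathT R G * unitI R => val q.1 q.2)); last exact: continuous_path_eval.
    apply: (@continuous_pair_at _ _ _ (fun p : G * unitI R => s (e, p.1)) f) => //.
    apply: continuous_comp (continuous_comp (@continuous_fst G (unitI R) p) (ce p.1)) _.
    exact: continuous_within_open_at oW cs Vp.
  apply: (@continuous_gmul_at _ T _ (fun p => gldiv T (hk p).1 (hk p).2)
     (fun p => gldiv T (gam p p.2) (gam p (I0 R)))).
    apply: (@continuous_gldiv_at _ T _ (fun p => (hk p).1) (fun p => (hk p).2)).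
      exact: continuous_comp chk (@continuous_fst G G _).
    exact: continuous_comp chk (@continuous_snd G G _).
  apply: (@continuous_gldiv_at _ T _ (fun p => gam p p.2) (fun p => gam p (I0 R))).
    exact/cgam/continuous_snd.
  by apply: (cgam (fun=> I0 R)); exact: cvg_cst.
- by move=> v Vv; rewrite /hk /= revI0 H1 //= gldiv1x gldivv gmulg1.
- by move=> v Vv; rewrite /hk /gam /= revI1 H0 //= gmul_ldiv gldivv.
Qed.

Lemma tc_domain_gldiv (U : set G) (H : G * unitI R -> G) :
  open U -> contracting_homotopy R U e H -> tc_domain [set q | U (gldiv T q.1 q.2)].
Proof.
move=> oU [cH H0 H1].
set W := [set q | U (gldiv T q.1 q.2)].
have oW : open W by apply: open_comp => // q _; exact: continuous_gldiv.
have gldiv_diag g q : gldiv T (m g q.1) (m g q.2) = gldiv T q.1 q.2 by exact: gldivM.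
split => //.
  by move=> g q; rewrite /W /= gldiv_diag.
exists (fun q => cst_path R q.1); split.
- apply: continuous_subspaceT => q.
  exact: continuous_comp (@continuous_fst G G q) (@continuous_cst_path R G q.1).
- by move=> g q _; exact: val_inj.
exists (fun p => (p.1.1, m p.1.1 (H (gldiv T p.1.1 p.1.2, revI p.2)))); split.
- rewrite continuous_open_subspace; last exact: open_preimage_fst.
  move=> p /set_mem Wp.
  have c11 : {for p, continuous (fun p : (G * G) * unitI R => p.1.1)}.
    exact: continuous_comp (@continuous_fst _ _ p) (@continuous_fst G G p.1).
  apply: (@continuous_pair_at _ _ _ (fun p : (G * G) * unitI R => p.1.1)
     (fun p => m p.1.1 (H (gldiv T p.1.1 p.1.2, revI p.2)))) => //.
  apply: (@continuous_gmul_at _ T _ (fun p : (G * G) * unitI R => p.1.1)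
     (fun p => H (gldiv T p.1.1 p.1.2, revI p.2))) => //.
  apply: (@continuous_comp _ _ _ (fun p : (G * G) * unitI R => (gldiv T p.1.1 p.1.2, revI p.2)) H).
    apply: (@continuous_pair_at _ _ _ (fun p : (G * G) * unitI R => gldiv T p.1.1 p.1.2)
      (fun p : (G * G) * unitI R => revI p.2)).
      apply: (@continuous_gldiv_at _ T _ (fun p : (G * G) * unitI R => p.1.1)
        (fun p : (G * G) * unitI R => p.1.2)) => //.
      exact: continuous_comp (@continuous_fst _ _ p) (@continuous_snd G G p.1).
    exact: continuous_comp (@continuous_snd _ _ p) (@continuous_revI R p.2).
  by apply: continuous_within_open_at (open_preimage_fst oU) cH _.
- by move=> q Wq; rewrite /= revI0 H1 // gmulg1.
- by move=> [x y] Wq; rewrite /= revI1 H0 // gldivK.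
- by move=> g q t Wq; rewrite /= gldiv_diag gmulA.
Qed.

Lemma cat_cover_TC_cover k : connected [set: G] ->
  cat_cover R G k <->
  secat_cover R act_paths act_diag (@path_ends R G) k.
Proof.
move=> cG; split.
- move=> catU; have all1 := cat_cover_joinable1 T cG catU.
  have [U [cov hU]] := catU.
  have contr i : exists H, contracting_homotopy R (U i) e H.
    by have [oU nU] := hU i; exact: contracting_homotopy_to1.
  have [H hH] := choice contr.
  exists (fun i => [set q : G * G | U i (gldiv T q.1 q.2)]); split.
    by move=> q; have [i Ui] := cov (gldiv T q.1 q.2); exists i.
  by move=> i; exact: tc_domain_gldiv (hU i).1 (hH i).
- move=> [W [cov hW]]; exists (fun i => [set v | W i (e, v)]); split.
    by move=> v; have [i Wi] := cov (e, v); exists i.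
  by move=> i; exact: tc_domain_fibre (hW i).
Qed.

End equivariant_motion_planning.

Theorem theorem5p11 (R : realType) (G : topologicalType) (T : topGroup G) :
  connected [set: G] -> metrizable R G -> compact [set: G] -> hausdorff_space G ->
  TCG R (@left_transl_cont G T) = LScat R G.
Proof.
move=> cG _ _ _; rewrite /TCG /secatG /LScat; congr nat_inf.
by apply/funext => k; apply/propext; exact: iff_sym (cat_cover_TC_cover R T k cG).
Qed.
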